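(* Let $X=(\vec x_i)_{i\ge1}$ be the infinite sequence in $[0,1]^2$ defined as follows: for each integer $\ell\ge2$ let $n_\ell:=\ell\lceil\ln^2\ell\rceil+1$ and $\theta_\ell:=\frac{\pi}{2(n_\ell-1)}$; for $0\le j\le n_\ell-1$ let $\vec x_{\ell,j}:=(\cos(j\theta_\ell),\sin(j\theta_\ell))$ if $\ell$ is even and $\vec x_{\ell,j}:=(\sin(j\theta_\ell),\cos(j\theta_\ell))$ if $\ell$ is odd; the sequence lists all $\vec x_{\ell,j}$ lexicographically in $(\ell,j)$. Then \[\sup_{(c_i)_{i\ge1}\,:\,c_i\in[0,\sqrt2]}\ \sum_{i\ge1} c_i\,\vec x_i\cdot(\vec x_i-\vec x_{i+1}) \;=\;\sqrt2\sum_{i\ge1}\bigl(1-\vec x_i\cdot\vec x_{i+1}\bigr)\;\le\;6.\] *)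

From HB Require Import structures.
From mathcomp Require Import all_boot all_order all_algebra.
From mathcomp Require Import all_classical all_reals all_analysis.
Set Implicit Arguments. Unset Strict Implicit. Unset Printing Implicit Defensive.
Import Order.TTheory GRing.Theory Num.Theory.
Local Open Scope ring_scope.

Section Defs.
Variable R : realType.

Definition nl (l : nat) : nat :=
  (l * `|Num.ceil (ln (l%:R : R) ^+ 2)|%N).+1.

Definition thetal (l : nat) : R := pi / (2 * ((nl l).-1)%:R).

Definition xlj (l j : nat) : R * R :=
  if odd l then (sin (j%:R * thetal l), cos (j%:R * thetal l))
  else (cos (j%:R * thetal l), sin (j%:R * thetal l)).

(* Given a 0-based position k within the concatenation of the blocks
   l, l+1, l+2, ..., return (block index, index j inside the block).
   Each block is nonempty (n_l >= 1) so fuel k.+1 always suffices. *)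
Fixpoint locate (fuel l k : nat) : nat * nat :=
  match fuel with
  | 0 => (l, k)
  | fuel'.+1 => if (k < nl l)%N then (l, k) else locate fuel' l.+1 (k - nl l)%N
  end.

(* The sequence X, indexed from i = 1: x_1 = x_{2,0}, x_2 = x_{2,1}, ...
   listing the x_{l,j} lexicographically in (l, j), l >= 2, 0 <= j <= n_l - 1. *)
Definition xseq (i : nat) : R * R :=
  let p := locate i (2%N) i.-1 in xlj p.1 p.2.

Definition dot (u v : R * R) : R := u.1 * v.1 + u.2 * v.2.

End Defs.

From HB Require Import structures.
From mathcomp Require Import all_boot all_order all_algebra.
From mathcomp Require Import all_classical all_reals all_analysis.
From mathcomp Require Import zify ring lra.
Import Order.TTheory GRing.Theory Num.Theory.

Set Implicit Arguments.
Unset Strict Implicit.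
Unset Printing Implicit Defensive.
Local Open Scope classical_set_scope.
Local Open Scope ring_scope.

(** Consecutive points of block [l] are unit vectors at angle [theta_l], and
    the last point of block [l] is the first point of block [l+1], so the sum
    is [sum_l (n_l - 1)(1 - cos theta_l)].  Since [(n_l - 1) theta_l = pi/2]
    and [1 - cos t <= t^2/2], block [l] contributes at most
    [pi^2/8 / (l ln^2 l)], and [1/(l ln^2 l) <= 1/ln(l-1) - 1/ln l]
    telescopes: the blocks from [l] on contribute at most [pi^2/8 / ln(l-1)].
    Hence the sum is at most [pi^2/8 (1/2 + 1/ln 2) < 6/sqrt 2].  The
    supremum is reached by the constant weight [sqrt 2], because
    [x_i . (x_i - x_{i+1}) = 1 - x_i . x_{i+1} >= 0] for unit vectors. *)

Section ElementaryBounds.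
Variable R : realType.

Lemma sin_le_id (t : R) : 0 <= t -> sin t <= t.
Proof.
move=> t0.
have D (x : R) : is_derive x (1:R) (fun y : R => y - sin y) (1 - cos x).
  exact: is_deriveB.
have C : {within `[0, t], continuous (fun y : R => y - sin y)}.
  by apply: derivable_within_continuous => x _; exact: (@ex_derive _ _ _ _ _ _ _ (D x)).
have [c _ h] := MVT_segment t0 (fun x _ => D x) C.
have : 0 <= (1 - cos c) * (t - 0) by apply: mulr_ge0; [rewrite subr_ge0 cos_le1|lra].
by rewrite -h sin0; lra.
Qed.

Lemma one_sub_cos_le (t : R) : 1 - cos t <= t ^+ 2 / 2.
Proof.
wlog t0 : t / 0 <= t.
  by move=> H; rewrite -cos_norm -real_normK ?num_real //; apply: H.
have D (x : R) : is_derive x (1:R) (fun y : R => y ^+ 2 / 2 + cos y) (x - sin x).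
  apply: is_derive_eq.
  rewrite !scaler0 add0r -[_ *: (_ + _)]/(2^-1 * (x * 1 + x * 1)) mulr1.
  by congr (_ - _); field.
have C : {within `[0, t], continuous (fun y : R => y ^+ 2 / 2 + cos y)}.
  by apply: derivable_within_continuous => x _; exact: (@ex_derive _ _ _ _ _ _ _ (D x)).
have [c /[!in_itv]/= /andP[c0 _] h] := MVT_segment t0 (fun x _ => D x) C.
have : 0 <= (c - sin c) * (t - 0) by apply: mulr_ge0; [rewrite subr_ge0 sin_le_id|lra].
by rewrite -h cos0; lra.
Qed.

Lemma ln_subr1_le (L : R) : 1 < L -> ln (L - 1) <= ln L - L^-1.
Proof.
move=> L1; have L0 : 0 < L by lra.
have Li : L^-1 < 1 by rewrite invf_lt1.
have -> : L - 1 = L * (1 + - L^-1) by rewrite mulrDr mulr1 mulrN divff ?gt_eqF.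
rewrite lnM ?posrE; [|by []|lra].
by rewrite lerD2l le_ln1Dx // ltrN2.
Qed.

Lemma ln2_ge : 5 / 8 <= ln (2 : R).
Proof.
have e0 : 0 < expR (5 / 32 : R) by exact: expR_gt0.
(* from [1 - 5/32 <= expR (-5/32)] *)
have e32 : expR (5 / 32) <= 32 / 27 :> R.
  have := expR_ge1Dx (- (5 / 32) : R); rewrite expRN.
  by rewrite -(ler_pM2l e0) mulfV ?gt_eqF //; nra.
have e8 : expR (5 / 8) <= 2 :> R.
  have -> : (5 / 8 : R) = 4%:R * (5 / 32) by lra.
  rewrite expRM_natl; apply: le_trans (_ : (32 / 27) ^+ 4 <= 2); last by lra.
  by apply: lerXn2r; rewrite ?nnegrE ?expR_ge0.
by rewrite -ler_expR lnK ?posrE.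
Qed.

Lemma inv_mul_ln2_le (L : R) : 2 < L ->
  (L * ln L ^+ 2)^-1 <= (ln (L - 1))^-1 - (ln L)^-1.
Proof.
move=> L2; have L0 : 0 < L by lra.
have a0 : 0 < ln (L - 1) by apply: ln_gt0; lra.
have ab : ln (L - 1) <= ln L by rewrite ler_ln ?posrE; lra.
have hd : ln (L - 1) <= ln L - L^-1 by apply: ln_subr1_le; lra.
move: a0 ab hd; set a := ln (L - 1); set b := ln L => a0 ab hd.
have b0 : 0 < b by exact: lt_le_trans ab.
have -> : a^-1 - b^-1 = (b - a) / (a * b) by field; rewrite !gt_eqF.
apply: le_trans (_ : L^-1 / (a * b) <= _); last first.
  by apply: ler_wpM2r; [rewrite invr_ge0 mulr_ge0 // ltW|lra].
rewrite -invfM lef_pV2 ?posrE ?mulr_gt0 ?exprn_gt0 //.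
by rewrite ler_pM2l // expr2 ler_pM2r.
Qed.

End ElementaryBounds.

Section Series.
Variable R : realType.

Lemma nneseries_le_partial (u : R ^nat) N (B : R) :
  (forall i, (N <= i)%N -> 0 <= u i) ->
  (forall n, \sum_(N <= i < n) u i <= B) ->
  (\sum_(N <= i <oo) (u i)%:E <= B%:E)%E.
Proof.
move=> u0 uB; apply: lime_le.
  by apply: is_cvg_ereal_nneg_natsum => n Nn; rewrite lee_fin u0.
by apply: nearW => n; rewrite sumEFin lee_fin.
Qed.

Lemma ereal_sup_weighted_nneseries (a : R ^nat) N (M : R) :
  0 <= M -> (forall i, 0 <= a i) ->
  ereal_sup [set (\sum_(N <= i <oo) (c i * a i)%:E)%E
            | c in [set c : R ^nat | forall i, (N <= i)%N -> 0 <= c i <= M]]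
  = (M%:E * \sum_(N <= i <oo) (a i)%:E)%E.
Proof.
move=> M0 a0.
rewrite -nneseriesZl; last by move=> i _; rewrite lee_fin.
apply: le_anti; apply/andP; split; last first.
  apply: ereal_sup_ubound; exists (fun=> M); first by move=> i _; rewrite M0 lexx.
  by apply: eq_eseriesr => i _; rewrite EFinM.
apply/ereal_supP => _ [c cM <-]; apply: lee_lim.
- apply: is_cvg_ereal_nneg_natsum => n Nn.
  by rewrite lee_fin mulr_ge0 ?a0 //; case/andP: (cM n Nn).
- by apply: is_cvg_ereal_nneg_natsum => n Nn; rewrite lee_fin mulr_ge0 ?a0.
- apply: nearW => n; rewrite big_nat_cond [X in (_ <= X)%E]big_nat_cond.
  apply: lee_sum => i /andP[/andP[Ni _] _].
  by rewrite lee_fin ler_wpM2r ?a0 //; case/andP: (cM i Ni).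
Qed.

End Series.

Section Points.
Variable R : realType.

Lemma dotBr (u v w : R * R) : dot u (v - w) = dot u v - dot u w.
Proof. by rewrite /dot /=; ring. Qed.

Lemma dot_le1 (u v : R * R) : dot u u = 1 -> dot v v = 1 -> dot u v <= 1.
Proof.
case: u => u1 u2; case: v => v1 v2; rewrite /dot /= => hu hv.
have : 0 <= (u1 - v1) ^+ 2 + (u2 - v2) ^+ 2 by rewrite addr_ge0 ?sqr_ge0.
nra.
Qed.

Definition ceil_ln2 (l : nat) : nat := `|Num.ceil (ln (l%:R : R) ^+ 2)|%N.

Lemma nl_gt0 l : (0 < nl R l)%N.
Proof. by []. Qed.

Lemma nlE l : nl R l = (l * ceil_ln2 l).+1.
Proof. by []. Qed.

Lemma ceil_ln2_ge l : ln (l%:R : R) ^+ 2 <= (ceil_ln2 l)%:R.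
Proof.
rewrite /ceil_ln2 natr_absz ger0_norm; first exact: ceil_ge.
by rewrite ceil_ge0 (lt_le_trans _ (sqr_ge0 _)) // ltrN10.
Qed.

Lemma ln_nat_gt0 l : (1 < l)%N -> 0 < ln (l%:R : R).
Proof. by move=> l1; apply: ln_gt0; rewrite ltr1n. Qed.

Lemma pred_nl_gt0 l : (1 < l)%N -> 0 < ((nl R l).-1)%:R :> R.
Proof.
move=> l1; have c0 : 0 < (ceil_ln2 l)%:R :> R.
  by apply: lt_le_trans (ceil_ln2_ge l); rewrite exprn_gt0 // ln_nat_gt0.
by rewrite nlE /= natrM mulr_gt0 // ltr0n ltnW.
Qed.

Lemma pred_nl_mul_thetal l : (1 < l)%N -> ((nl R l).-1)%:R * thetal R l = pi / 2.
Proof.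
move=> l1; have := pred_nl_gt0 l1; rewrite /thetal.
by move: (_%:R) => N N0; field; rewrite gt_eqF.
Qed.

Lemma dot_xlj_self l j : dot (xlj R l j) (xlj R l j) = 1.
Proof.
by rewrite /xlj /dot; case: ifP => _ /=; rewrite -!expr2 ?cos2Dsin2 // addrC cos2Dsin2.
Qed.

Lemma dot_xlj_succ l j : dot (xlj R l j) (xlj R l j.+1) = cos (thetal R l).
Proof.
rewrite /xlj /dot mulrSr mulrDl mul1r.
case: ifP => _ /=; rewrite ?[sin _ * _ + _]addrC -cosB opprD addrA subrr add0r cosN //.
Qed.

Lemma xlj_last l : (1 < l)%N -> xlj R l (nl R l).-1 = xlj R l.+1 0.
Proof.
move=> l1; rewrite /xlj pred_nl_mul_thetal // mul0r /=.
by case: (odd l) => /=; rewrite sin_pihalf cos_pihalf sin0 cos0.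
Qed.

End Points.

Section Locate.
Variable R : realType.

Lemma locateS fuel l k : locate R fuel.+1 l k =
  if (k < nl R l)%N then (l, k) else locate R fuel l.+1 (k - nl R l).
Proof. by []. Qed.

Lemma locate_step fuel l k : (k < fuel)%N ->
  [/\ ((locate R fuel l k).2 < nl R (locate R fuel l k).1)%N,
      (l <= (locate R fuel l k).1)%N &
      locate R fuel.+1 l k.+1 =
        if ((locate R fuel l k).2.+1 < nl R (locate R fuel l k).1)%N
        then ((locate R fuel l k).1, (locate R fuel l k).2.+1)
        else ((locate R fuel l k).1.+1, 0%N)].
Proof.
elim: fuel l k => [//|f IH] l k kf.
rewrite (locateS f.+1) locateS; case: ifP => kn.
  split => //; case: ifP => // kn2.
  have -> : (k.+1 - nl R l = 0)%N by apply/eqP; rewrite subn_eq0.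
  by case: f {IH kf} => [|f] //; rewrite locateS.
move/negbT: kn; rewrite -leqNgt => kn.
have kn' : (k.+1 < nl R l)%N = false by apply/negbTE; lia.
rewrite kn' subSn //.
have [h1 h2 h3] := IH l.+1 (k - nl R l)%N ltac:(have := nl_gt0 R l; lia).
by split => //; lia.
Qed.

Definition loc (k : nat) : nat * nat := locate R k.+1 2 k.

Lemma loc_step k : [/\ ((loc k).2 < nl R (loc k).1)%N, (2 <= (loc k).1)%N &
  loc k.+1 = if ((loc k).2.+1 < nl R (loc k).1)%N then ((loc k).1, (loc k).2.+1)
             else ((loc k).1.+1, 0%N)].
Proof. exact: locate_step. Qed.

Lemma xseq_loc k : xseq R k.+1 = xlj R (loc k).1 (loc k).2.
Proof. by []. Qed.

Lemma dot_xseq_self i : dot (xseq R i) (xseq R i) = 1.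
Proof. exact: dot_xlj_self. Qed.

End Locate.

Section Telescoping.
Variable R : realType.

Definition block_gap (l : nat) : R := 1 - cos (thetal R l).

Definition tail_bound (k : nat) : R := pi ^+ 2 / 8 / ln (k.-1)%:R.

(* Bound on what remains of the series from position [(l, j)] on. *)
Definition remaining (l j : nat) : R :=
  ((nl R l).-1 - j)%:R * block_gap l + tail_bound l.+1.

Definition seq_gap (i : nat) : R := 1 - dot (xseq R i) (xseq R i.+1).

Lemma seq_gap_ge0 i : 0 <= seq_gap i.
Proof. by rewrite subr_ge0 dot_le1 // dot_xseq_self. Qed.

Lemma remaining_ge0 l j : (2 <= l)%N -> 0 <= remaining l j.
Proof.
move=> l2; have t0 : 0 <= tail_bound l.+1.
  by rewrite !divr_ge0 ?sqr_ge0 // ltW // ln_nat_gt0.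
by rewrite addr_ge0 // mulr_ge0 // subr_ge0 cos_le1.
Qed.

Lemma block_sum_le l : (1 < l)%N ->
  ((nl R l).-1)%:R * block_gap l <= pi ^+ 2 / 8 / ((nl R l).-1)%:R.
Proof.
move=> l1; have N0 := pred_nl_gt0 R l1.
apply: le_trans (_ : (nl R l).-1%:R * (thetal R l ^+ 2 / 2) <= _).
  by apply: ler_wpM2l; [exact: ltW | exact: one_sub_cos_le].
have pE : pi = 2 * (((nl R l).-1)%:R * thetal R l) by rewrite pred_nl_mul_thetal //; field.
rewrite [in leRHS]pE; move: N0; set N := ((nl R l).-1)%:R => N0.
by rewrite le_eqVlt; apply/orP; left; apply/eqP; field; rewrite gt_eqF.
Qed.

Lemma pred_nl_ge l : l%:R * ln (l%:R : R) ^+ 2 <= ((nl R l).-1)%:R.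
Proof. by rewrite nlE /= natrM ler_wpM2l // ceil_ln2_ge. Qed.

Lemma block_tail_le k : (2 < k)%N ->
  ((nl R k).-1)%:R * block_gap k + tail_bound k.+1 <= tail_bound k.
Proof.
move=> k2; have k1 := ltnW k2.
have kln0 : 0 < k%:R * ln (k%:R : R) ^+ 2.
  by rewrite mulr_gt0 ?ltr0n 1?ltnW // exprn_gt0 // ln_nat_gt0.
have Lk : k%:R - 1 = (k.-1)%:R :> R by rewrite -subn1 natrB // ltnW.
have h := @inv_mul_ln2_le R k%:R; rewrite ltr_nat Lk in h; have {}h := h k2.
apply: le_trans (lerD (block_sum_le k1) (lexx _)) _.
rewrite /tail_bound -[k.+1.-1]/k -mulrDr ler_wpM2l ?divr_ge0 ?sqr_ge0 //.
have : ((nl R k).-1)%:R^-1 <= (k%:R * ln (k%:R : R) ^+ 2)^-1.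
  by rewrite lef_pV2 ?posrE ?pred_nl_gt0 ?pred_nl_ge.
lra.
Qed.

Lemma remaining_step k :
  seq_gap k.+1 + remaining (loc R k.+1).1 (loc R k.+1).2
  <= remaining (loc R k).1 (loc R k).2.
Proof.
rewrite /seq_gap !xseq_loc; have [jn l2 ->] := loc_step R k.
move: jn l2; case: (loc R k) => l j /= jn l2.
case: ifP => jn1 /=.
  rewrite dot_xlj_succ /remaining.
  have -> : ((nl R l).-1 - j = ((nl R l).-1 - j.+1).+1)%N by lia.
  by rewrite mulrSr /block_gap; lra.
have -> : j = (nl R l).-1 by lia.
rewrite xlj_last // dot_xlj_self subrr add0r /remaining subn0 subnn mul0r add0r.
exact: block_tail_le.
Qed.

Lemma partial_seq_gap_le n : \sum_(1 <= i < n) seq_gap i <= remaining 2 0.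
Proof.
have partial N : \sum_(1 <= i < N.+1) seq_gap i + remaining (loc R N).1 (loc R N).2
                 <= remaining 2 0.
  elim: N => [|N IH]; first by rewrite big_geq // add0r.
  rewrite big_nat_recr //= -addrA; apply: le_trans IH.
  by rewrite lerD2l remaining_step.
case: n => [|N]; first by rewrite big_geq // remaining_ge0.
have [_ l2 _] := loc_step R N.
by have := partial N; have := remaining_ge0 (loc R N).2 l2; lra.
Qed.

Lemma sqrt2_remaining_le : Num.sqrt 2 * remaining 2 0 <= 6.
Proof.
have P0 : 0 <= pi ^+ 2 / 8 :> R by rewrite divr_ge0 ?sqr_ge0.
have P2 : pi ^+ 2 / 8 <= 2 :> R.
  by have := pihalf_lt2 R; have := pi_ge0 R; nra.
have N2 : 2 <= ((nl R 2).-1)%:R :> R.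
  by rewrite nlE /= ler_nat leq_pmulr // -(ltr0n R) (lt_le_trans _ (ceil_ln2_ge R 2))
    // exprn_gt0 // ln_nat_gt0.
have hX : ((nl R 2).-1)%:R * block_gap 2 <= pi ^+ 2 / 8 / 2.
  apply: le_trans (block_sum_le (isT : (1 < 2)%N)) _.
  by rewrite ler_wpM2l // lef_pV2 ?posrE // (lt_le_trans _ N2).
have l2 : 5 / 8 <= ln (2 : R) by exact: ln2_ge.
have hY : tail_bound 3 <= pi ^+ 2 / 8 * (8 / 5).
  rewrite /tail_bound ler_wpM2l // -[8 / 5 : R]invf_div lef_pV2 ?posrE //.
  by rewrite (lt_le_trans _ l2).
have s2 : Num.sqrt 2 ^+ 2 = 2 :> R by rewrite sqr_sqrtr.
have s0 : 0 <= Num.sqrt 2 :> R by exact: sqrtr_ge0.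
have r0 : 0 <= remaining 2 0 by exact: remaining_ge0.
move: r0; rewrite /remaining subn0 => r0; nra.
Qed.

End Telescoping.

Theorem proposition5p6 (R : realType) :
  let x := @xseq R in
  let S := [set (\sum_(1 <= i <oo)
                   ((c i * dot (x i) (x i - x i.+1)%R)%:E))%E
           | c in [set c : nat -> R | forall i, (1 <= i)%N -> 0 <= c i <= Num.sqrt 2]] in
  ereal_sup S = ((Num.sqrt 2)%:E * \sum_(1 <= i <oo) ((1 - dot (x i) (x i.+1))%:E))%E
  /\ ((Num.sqrt 2)%:E * \sum_(1 <= i <oo) ((1 - dot (x i) (x i.+1))%:E) <= 6%:E)%E.
Proof.
move=> x S.
have gapE i : dot (x i) (x i - x i.+1) = seq_gap R i by rewrite dotBr dot_xseq_self.
have sqrt2_ge0 : 0 <= Num.sqrt 2 :> R by exact: sqrtr_ge0.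
split.
  rewrite /S ereal_sup_weighted_nneseries // => [|i]; last by rewrite gapE seq_gap_ge0.
  by congr (_ * _)%E; apply: eq_eseriesr => i _; rewrite gapE.
have sum_le : (\sum_(1 <= i <oo) (seq_gap R i)%:E <= (remaining R 2 0)%:E)%E.
  apply: nneseries_le_partial => [i _|n]; [exact: seq_gap_ge0 | exact: partial_seq_gap_le].
apply: le_trans (lee_wpmul2l _ sum_le) _; first by rewrite lee_fin.
by rewrite -EFinM lee_fin sqrt2_remaining_le.
Qed.
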